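(* Let $\Gamma$ be a group acting by homeomorphisms on a Hausdorff topological space $\Omega$. Assume the action is strongly hyperbolic on $\Omega$ and strongly faithful on $L_\Gamma$. Then: (i) every non-empty closed $\Gamma$-invariant subset of $\Omega$ contains $\overline{L_\Gamma}$. Let moreover $N$ be a normal subgroup of $\Gamma$ containing a hyperbolic homeomorphism. Then: (ii) $\overline{L_N}=\overline{L_\Gamma}$; (iii) $N$ is a Powers group.
   Context: A homeomorphism $\gamma$ of $\Omega$ is hyperbolic if there are two points $\alpha(\gamma),\omega(\gamma)\in\Omega$ fixed by $\gamma$ such that for all neighbourhoods $U$ of $\alpha(\gamma)$ and $V$ of $\omega(\gamma)$ one has $\gamma^n(\Omega\setminus U)\subset V$ and $\gamma^{-n}(\Omega\setminus V)\subset U$ for all large $n$. Two hyperbolic homeomorphisms are transverse if they have no common fixed point; an action is strongly hyperbolic if the group contains two transverse hyperbolic homeomorphisms. For a group $\Lambda$ of homeomorphisms, $L_\Lambda=\{\eta\in\Omega\mid \eta=\omega(\gamma)\text{ for some hyperbolic }\gamma\in\Lambda\}$. An action on a set $X$ is strongly faithful if for every finite subset $F$ of the group not containing $1$ there is $x\in X$ with $\gamma(x)\neq x$ for all $\gamma\in F$. A group $N\neq\{1\}$ is a Powers group if for every finite $F\subset N\setminus\{1\}$ and integer $k\ge1$ there are a partition $N=C\sqcup D$ and $\gamma_1,\dots,\gamma_k\in N$ with $fC\cap C=\emptyset$ ($f\in F$) and $\gamma_iD\cap\gamma_jD=\emptyset$ ($i\ne j$). *)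

From Stdlib Require Import List Arith Classical.
Import ListNotations.


Record topology (X : Type) := Topology {
  is_open : (X -> Prop) -> Prop;
  open_full : is_open (fun _ => True);
  open_inter : forall U V, is_open U -> is_open V ->
                 is_open (fun x => U x /\ V x);
  open_union : forall (F : (X -> Prop) -> Prop),
                 (forall U, F U -> is_open U) ->
                 is_open (fun x => exists U, F U /\ U x)
}.
Arguments is_open {X} t _.

Definition is_closed {X : Type} (T : topology X) (S : X -> Prop) : Prop :=
  is_open T (fun x => ~ S x).

Definition hausdorff {X : Type} (T : topology X) : Prop :=
  forall x y, x <> y -> exists U V, is_open T U /\ is_open T V /\ U x /\ V y /\
    (forall z, ~ (U z /\ V z)).

Definition nbhd {X : Type} (T : topology X) (x : X) (U : X -> Prop) : Prop :=
  exists O, is_open T O /\ O x /\ (forall y, O y -> U y).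

Definition continuous {X : Type} (T : topology X) (f : X -> X) : Prop :=
  forall U, is_open T U -> is_open T (fun x => U (f x)).

Definition closure {X : Type} (T : topology X) (A : X -> Prop) : X -> Prop :=
  fun x => forall O, is_open T O -> O x -> exists y, O y /\ A y.

(** * Hyperbolic homeomorphisms.
    [f] is the homeomorphism, [finv] its inverse; [f^n] is [Nat.iter n f].
    [a] = alpha(f) (repelling), [w] = omega(f) (attracting). *)
Definition hyperbolic_pts {X : Type} (T : topology X) (f finv : X -> X) (a w : X) : Prop :=
  a <> w /\ f a = a /\ f w = w /\
  forall U V, nbhd T a U -> nbhd T w V ->
    exists n0, forall n, n0 <= n ->
      (forall x, ~ U x -> V (Nat.iter n f x)) /\
      (forall x, ~ V x -> U (Nat.iter n finv x)).

Definition hyperbolic {X : Type} (T : topology X) (f finv : X -> X) : Prop :=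
  exists a w, hyperbolic_pts T f finv a w.

Record group := Group {
  gcar :> Type;
  gmul : gcar -> gcar -> gcar;
  gone : gcar;
  ginv : gcar -> gcar;
  gmulA : forall x y z, gmul x (gmul y z) = gmul (gmul x y) z;
  gmul1 : forall x, gmul gone x = x;
  gmulV : forall x, gmul (ginv x) x = gone
}.
Arguments gmul {g} _ _ : rename.
Arguments gone {g}.
Arguments ginv {g} _.

Definition normal_subgroup {G : group} (N : G -> Prop) : Prop :=
  N gone /\
  (forall x y, N x -> N y -> N (gmul x y)) /\
  (forall x, N x -> N (ginv x)) /\
  (forall g x, N x -> N (gmul (gmul g x) (ginv g))).

Definition action_by_homeos {G : group} {X : Type} (T : topology X) (act : G -> X -> X) : Prop :=
  (forall x, act gone x = x) /\
  (forall g h x, act (gmul g h) x = act g (act h x)) /\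
  (forall g, continuous T (act g)).

Definition hyp_elt {G : group} {X : Type} (T : topology X) (act : G -> X -> X) (g : G) : Prop :=
  hyperbolic T (act g) (act (ginv g)).

Definition transverse {G : group} {X : Type} (T : topology X) (act : G -> X -> X) (g h : G) : Prop :=
  hyp_elt T act g /\ hyp_elt T act h /\
  ~ (exists x, act g x = x /\ act h x = x).

Definition strongly_hyperbolic {G : group} {X : Type} (T : topology X) (act : G -> X -> X) : Prop :=
  exists g h, transverse T act g h.

Definition limit_set {G : group} {X : Type} (T : topology X) (act : G -> X -> X)
  (Lam : G -> Prop) : X -> Prop :=
  fun eta => exists g, Lam g /\ exists a, hyperbolic_pts T (act g) (act (ginv g)) a eta.

Definition strongly_faithful_on {G : group} {X : Type} (act : G -> X -> X) (Y : X -> Prop) : Prop :=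
  forall F : list G, ~ In gone F ->
    exists x, Y x /\ forall g, In g F -> act g x <> x.

Definition powers {G : group} (N : G -> Prop) : Prop :=
  (exists x, N x /\ x <> gone) /\
  forall (F : list G) (k : nat),
    (forall f, In f F -> N f /\ f <> gone) -> 1 <= k ->
    exists (C D : G -> Prop) (gam : nat -> G),
      (forall x, N x <-> (C x \/ D x)) /\
      (forall x, ~ (C x /\ D x)) /\
      (forall i, i < k -> N (gam i)) /\
      (forall f, In f F -> forall c, C c -> ~ C (gmul f c)) /\
      (forall i j, i < k -> j < k -> i <> j ->
         forall d d', D d -> D d' -> gmul (gam i) d <> gmul (gam j) d').

From Stdlib Require Import List Arith Classical.
From Stdlib Require Import Lia FunctionalExtensionality PropExtensionality.

(** The argument only uses the north–south dynamics of hyperbolic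
    homeomorphisms together with the Hausdorff property.
    - Dynamics: a point distinct from alpha(f) is attracted towards omega(f);
      hence a closed set containing a forward orbit of such a point contains
      omega(f), and a forward orbit inside a two-point set forces omega(f) to
      lie in that set.
    - Strong hyperbolicity then yields, for any two points z, p, a group
      element moving z off {z, p}.  With this, (i) follows: every limit point
      is an attractor of some point of the closed invariant set S.
    - (ii): the closure of L_N is closed, non-empty and Gamma-invariant
      (conjugating a hyperbolic element of N moves its fixed points), so (i)
      applies to it.
    - (iii): for a finite F not containing 1, strong faithfulness gives
      x0 in L_Gamma moved by all of F, hence an open U around x0 with
      fU disjoint from U.  By (ii), U meets L_N, and a suitable conjugate k in N
      of a hyperbolic element has both fixed points in U, so a power k^m maps
      the complement of U into U.  The partition C = {y | y x0 in U},
      D = its complement, and the elements k^(i m) witness the Powers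
      property by a ping-pong argument. *)

Lemma iter_injective {A : Type} (f : A -> A) :
  (forall x y, f x = f y -> x = y) ->
  forall n x y, Nat.iter n f x = Nat.iter n f y -> x = y.
Proof. intros Hf n; induction n; simpl; auto. Qed.

Section Topology.
Variable X : Type.
Variable T : topology X.

Lemma open_ext (P Q : X -> Prop) :
  is_open T P -> (forall x, P x <-> Q x) -> is_open T Q.
Proof.
  intros HP HPQ.
  assert (E : P = Q).
  { extensionality x. apply propositional_extensionality. auto. }
  now subst.
Qed.

Lemma nbhd_open (O : X -> Prop) x : is_open T O -> O x -> nbhd T x O.
Proof. intros HO Ox. exists O; auto. Qed.

Lemma nbhd_preimage (f : X -> X) p U :
  continuous T f -> nbhd T (f p) U -> nbhd T p (fun z => U (f z)).
Proof.
  intros Hf [O [HO [HOp HOU]]].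
  exists (fun z => O (f z)). auto.
Qed.

(** The closure is closed: its complement is the union of the open sets
    missing [A]. *)
Lemma closure_closed (A : X -> Prop) : is_closed T (closure T A).
Proof.
  unfold is_closed.
  apply open_ext with
    (P := fun x => exists O, (is_open T O /\ forall y, O y -> ~ A y) /\ O x).
  - apply open_union. now intros U [HU _].
  - intro x; split.
    + intros [O [[HO HOA] HOx]] Hc.
      destruct (Hc O HO HOx) as [y [Oy Ay]]. exact (HOA y Oy Ay).
    + intros Hn. apply NNPP; intro Hne. apply Hn. intros O HO HOx.
      apply NNPP; intro Hno. apply Hne. exists O.
      split; [split|]; auto.
      intros y Oy Ay. apply Hno. eauto.
Qed.

Lemma subset_closure (A : X -> Prop) x : A x -> closure T A x.
Proof. intros Ax O HO Ox. eauto. Qed.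

Lemma closure_mono (A B : X -> Prop) :
  (forall x, A x -> B x) -> forall x, closure T A x -> closure T B x.
Proof.
  intros HAB x Hx O HO Ox.
  destruct (Hx O HO Ox) as [y [Oy Ay]]. eauto.
Qed.

Lemma closure_minimal (A S : X -> Prop) :
  is_closed T S -> (forall x, A x -> S x) -> forall x, closure T A x -> S x.
Proof.
  intros HS HAS x Hx. apply NNPP; intro Sx.
  destruct (Hx _ HS Sx) as [y [Sy Ay]]. auto.
Qed.

Lemma closure_image (f : X -> X) (A : X -> Prop) :
  continuous T f -> (forall x, A x -> A (f x)) ->
  forall x, closure T A x -> closure T A (f x).
Proof.
  intros Hf HA x Hx O HO Ofx.
  destruct (Hx (fun u => O (f u)) (Hf O HO) Ofx) as [y [Ofy Ay]]. eauto.
Qed.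

Hypothesis Hhaus : hausdorff T.

Lemma separate_point x y : x <> y -> exists O, is_open T O /\ O x /\ ~ O y.
Proof.
  intro Hne. destruct (Hhaus x y Hne) as [U [V [HU [HV [Ux [Vy Hd]]]]]].
  exists U. repeat split; auto. intro Uy. apply (Hd y); auto.
Qed.

Lemma separate_point2 x y z :
  x <> y -> x <> z -> exists O, is_open T O /\ O x /\ ~ O y /\ ~ O z.
Proof.
  intros Hy Hz.
  destruct (separate_point x y Hy) as [A [HA [Ax Ay]]].
  destruct (separate_point x z Hz) as [B [HB [Bx Bz]]].
  exists (fun u => A u /\ B u).
  split; [now apply open_inter|]. split; [auto|]. split; intros [? ?]; auto.
Qed.

(** * North–south dynamics of a hyperbolic homeomorphism *)

Section Hyperbolic.
Variables (f finv : X -> X) (a w : X).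
Hypothesis Hhyp : hyperbolic_pts T f finv a w.

Lemma hyperbolic_attracts y V :
  y <> a -> is_open T V -> V w -> exists n0, forall n, n0 <= n -> V (Nat.iter n f y).
Proof.
  intros Hya HV Vw. destruct Hhyp as [_ [_ [_ Hdyn]]].
  destruct (separate_point a y (fun E => Hya (eq_sym E))) as [A [HA [Aa Ay]]].
  destruct (Hdyn A V (nbhd_open _ _ HA Aa) (nbhd_open _ _ HV Vw)) as [n0 Hn0].
  exists n0. intros n Hn. now apply (Hn0 n Hn).
Qed.

Lemma hyperbolic_repels y U :
  y <> w -> is_open T U -> U a -> exists n0, forall n, n0 <= n -> U (Nat.iter n finv y).
Proof.
  intros Hyw HU Ua. destruct Hhyp as [_ [_ [_ Hdyn]]].
  destruct (separate_point w y (fun E => Hyw (eq_sym E))) as [V [HV [Vw Vy]]].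
  destruct (Hdyn U V (nbhd_open _ _ HU Ua) (nbhd_open _ _ HV Vw)) as [n0 Hn0].
  exists n0. intros n Hn. now apply (Hn0 n Hn).
Qed.

Lemma closed_contains_attractor (S : X -> Prop) y :
  is_closed T S -> y <> a -> (forall n, S (Nat.iter n f y)) -> S w.
Proof.
  intros HS Hya Horb. apply NNPP; intro Sw.
  destruct (hyperbolic_attracts y _ Hya HS Sw) as [n0 Hn0].
  exact (Hn0 n0 (le_n _) (Horb n0)).
Qed.

Lemma attractor_in_orbit z p :
  z <> a -> (forall n, Nat.iter n f z = z \/ Nat.iter n f z = p) -> w = z \/ w = p.
Proof.
  intros Hza Horb. apply NNPP; intro Hw.
  destruct (separate_point2 w z p) as [V [HV [Vw [Vz Vp]]]]; [tauto|tauto|].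
  destruct (hyperbolic_attracts z V Hza HV Vw) as [n0 Hn0].
  specialize (Hn0 n0 (le_n _)).
  destruct (Horb n0) as [E|E]; rewrite E in Hn0; auto.
Qed.

Lemma repeller_in_orbit z p :
  z <> w -> (forall n, Nat.iter n finv z = z \/ Nat.iter n finv z = p) -> a = z \/ a = p.
Proof.
  intros Hzw Horb. apply NNPP; intro Ha.
  destruct (separate_point2 a z p) as [U [HU [Ua [Uz Up]]]]; [tauto|tauto|].
  destruct (hyperbolic_repels z U Hzw HU Ua) as [n0 Hn0].
  specialize (Hn0 n0 (le_n _)).
  destruct (Horb n0) as [E|E]; rewrite E in Hn0; auto.
Qed.

Lemma hyperbolic_absorbs U :
  is_open T U -> U a -> U w ->
  exists m, 0 < m /\ forall n, m <= n -> forall x, ~ U x -> U (Nat.iter n f x).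
Proof.
  intros HU Ua Uw. destruct Hhyp as [_ [_ [_ Hdyn]]].
  destruct (Hdyn U U (nbhd_open _ _ HU Ua) (nbhd_open _ _ HU Uw)) as [n0 Hn0].
  exists (S n0). split; [apply Nat.lt_0_succ|].
  intros n Hn. apply Hn0. lia.
Qed.

Lemma hyperbolic_not_identity y :
  (forall x, f x = x) -> y <> a -> y <> w -> False.
Proof.
  intros Hid Hya Hyw.
  destruct (separate_point w y (fun E => Hyw (eq_sym E))) as [V [HV [Vw Vy]]].
  destruct (hyperbolic_attracts y V Hya HV Vw) as [n0 Hn0].
  assert (Hfix : forall n, Nat.iter n f y = y).
  { induction n as [|n IH]; simpl; [reflexivity|now rewrite IH, Hid]. }
  apply Vy. rewrite <- (Hfix n0). now apply Hn0.
Qed.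

End Hyperbolic.
End Topology.

Section Action.
Variable G : group.

(** The group axioms are only one-sided; the right inverse law follows. *)
Lemma gmulV_r (g : G) : gmul g (ginv g) = gone.
Proof.
  assert (Hidem : gmul (gmul g (ginv g)) (gmul g (ginv g)) = gmul g (ginv g)).
  { rewrite <- gmulA, (gmulA G (ginv g) g (ginv g)), gmulV, gmul1. reflexivity. }
  set (y := gmul g (ginv g)) in *.
  rewrite <- (gmul1 G y) at 1. rewrite <- (gmulV G y), <- gmulA, Hidem.
  reflexivity.
Qed.

Fixpoint gpow (g : G) (n : nat) : G :=
  match n with 0 => gone | S n => gmul g (gpow g n) end.

Lemma normal_gpow (N : G -> Prop) g n : normal_subgroup N -> N g -> N (gpow g n).
Proof. intros [HN1 [HN2 _]] Ng. induction n; simpl; auto. Qed.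

Variable X : Type.
Variable T : topology X.
Variable act : G -> X -> X.
Hypothesis Hhaus : hausdorff T.
Hypothesis Hact : action_by_homeos T act.

Lemma act_one x : act gone x = x.
Proof. apply Hact. Qed.

Lemma act_mul g h x : act (gmul g h) x = act g (act h x).
Proof. apply Hact. Qed.

Lemma act_cont g : continuous T (act g).
Proof. apply Hact. Qed.

Lemma act_inv_l g x : act (ginv g) (act g x) = x.
Proof. now rewrite <- act_mul, gmulV, act_one. Qed.

Lemma act_inv_r g x : act g (act (ginv g) x) = x.
Proof. now rewrite <- act_mul, gmulV_r, act_one. Qed.

Lemma act_inj g x y : act g x = act g y -> x = y.
Proof. intro E. now rewrite <- (act_inv_l g x), E, act_inv_l. Qed.

Lemma act_gpow g n x : act (gpow g n) x = Nat.iter n (act g) x.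
Proof. induction n; simpl; [apply act_one|now rewrite act_mul, IHn]. Qed.

Lemma hyperbolic_conj c h a w :
  hyperbolic_pts T (act h) (act (ginv h)) a w ->
  hyperbolic_pts T (act (gmul (gmul c h) (ginv c)))
    (act (ginv (gmul (gmul c h) (ginv c)))) (act c a) (act c w).
Proof.
  intros [Haw [Hfa [Hfw Hdyn]]].
  set (k := gmul (gmul c h) (ginv c)).
  assert (Ek : forall y, act k y = act c (act h (act (ginv c) y))).
  { intro; unfold k; now rewrite !act_mul. }
  assert (Eki : forall y, act (ginv k) y = act c (act (ginv h) (act (ginv c) y))).
  { intro y. apply (act_inj k).
    now rewrite act_inv_r, Ek, act_inv_l, act_inv_r, act_inv_r. }
  assert (Iter : forall n y,
            Nat.iter n (act k) y = act c (Nat.iter n (act h) (act (ginv c) y))).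
  { induction n; intro y; simpl; [now rewrite act_inv_r|now rewrite IHn, Ek, act_inv_l]. }
  assert (IterI : forall n y,
            Nat.iter n (act (ginv k)) y = act c (Nat.iter n (act (ginv h)) (act (ginv c) y))).
  { induction n; intro y; simpl; [now rewrite act_inv_r|now rewrite IHn, Eki, act_inv_l]. }
  split; [intro E; apply Haw, (act_inj c), E|].
  split; [now rewrite Ek, act_inv_l, Hfa|].
  split; [now rewrite Ek, act_inv_l, Hfw|].
  intros U V HU HV.
  destruct (Hdyn (fun z => U (act c z)) (fun z => V (act c z))
               (nbhd_preimage _ _ _ _ _ (act_cont c) HU)
               (nbhd_preimage _ _ _ _ _ (act_cont c) HV)) as [n0 Hn0].
  exists n0. intros n Hn. destruct (Hn0 n Hn) as [H1 H2]. split.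
  - intros x Hx. rewrite Iter. apply H1. now rewrite act_inv_r.
  - intros x Hx. rewrite IterI. apply H2. now rewrite act_inv_r.
Qed.

Lemma limit_set_normal_invariant (N : G -> Prop) g x :
  normal_subgroup N -> limit_set T act N x -> limit_set T act N (act g x).
Proof.
  intros [_ [_ [_ HNconj]]] [h [Nh [a Hp]]].
  exists (gmul (gmul g h) (ginv g)). split; [auto|].
  exists (act g a). now apply hyperbolic_conj.
Qed.

Hypothesis Hsh : strongly_hyperbolic T act.

(** For any two points [z], [p], some group element moves [z] off [{z, p}]:
    otherwise every hyperbolic element would fix [z] (its fixed points would
    both be [p]), contradicting transversality. *)
Lemma exists_moving_element z p : exists t, act t z <> z /\ act t z <> p.
Proof.
  apply NNPP; intro Hno.
  assert (Hall : forall t, act t z = z \/ act t z = p).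
  { intro t. apply NNPP; intro H. apply Hno. exists t. split; intro E; apply H; auto. }
  assert (Hfix : forall g, hyp_elt T act g -> act g z = z).
  { intros g [a [w Hp]]. apply NNPP; intro Hmv.
    pose proof Hp as [Haw [Hfa [Hfw _]]].
    assert (Hza : z <> a) by (intros ->; auto).
    assert (Hzw : z <> w) by (intros ->; auto).
    destruct (attractor_in_orbit X T Hhaus _ _ _ _ Hp z p Hza)
      as [->|Ewp]; [intro n; rewrite <- act_gpow; apply Hall|congruence|].
    destruct (repeller_in_orbit X T Hhaus _ _ _ _ Hp z p Hzw)
      as [->|Eap]; [intro n; rewrite <- act_gpow; apply Hall|congruence|].
    congruence. }
  destruct Hsh as [g [h [Hg [Hh Hnc]]]].
  apply Hnc. exists z. split; apply Hfix; auto.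
Qed.

Lemma hyperbolic_nontrivial g : hyp_elt T act g -> g <> gone.
Proof.
  intros [a [w Hp]] ->.
  destruct (exists_moving_element a w) as [t [Ht1 Ht2]].
  apply (hyperbolic_not_identity X T Hhaus _ _ _ _ Hp (act t a)).
  - exact act_one.
  - exact Ht1.
  - exact Ht2.
Qed.

Notation L_Gamma := (limit_set T act (fun _ => True)).

(** (i) A non-empty closed invariant set contains the closure of the limit
    set: each limit point omega(g) attracts a point of [S] other than
    alpha(g). *)
Lemma closed_invariant_contains_limit_set (S : X -> Prop) :
  is_closed T S -> (exists x, S x) -> (forall g x, S x -> S (act g x)) ->
  forall x, closure T L_Gamma x -> S x.
Proof.
  intros HS [y Sy] Hinv. apply closure_minimal; [exact HS|].
  intros e [g [_ [a Hp]]].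
  assert (Hy' : exists y', S y' /\ y' <> a).
  { destruct (classic (y = a)) as [->|Hya]; [|eauto].
    destruct (exists_moving_element a a) as [t [Ht _]]. eauto. }
  destruct Hy' as [y' [Sy' Hya]].
  apply (closed_contains_attractor X T Hhaus _ _ _ _ Hp S y' HS Hya).
  intro n. rewrite <- act_gpow. auto.
Qed.

Lemma closure_limit_set_normal (N : G -> Prop) :
  normal_subgroup N -> (exists g, N g /\ hyp_elt T act g) ->
  forall x, closure T (limit_set T act N) x <-> closure T L_Gamma x.
Proof.
  intros HN [g0 [Ng0 [a [w Hp]]]] x. split.
  - apply closure_mono. intros y [g [_ Hg]]. now exists g.
  - apply closed_invariant_contains_limit_set.
    + apply closure_closed.
    + exists w. apply subset_closure. exists g0. eauto.
    + intros g z. apply closure_image; [apply act_cont|].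
      intros y. now apply limit_set_normal_invariant.
Qed.

Lemma ping_pong_neighbourhood (F : list G) x0 :
  (forall f, In f F -> act f x0 <> x0) ->
  exists U, is_open T U /\ U x0 /\ forall f, In f F -> forall y, U y -> ~ U (act f y).
Proof.
  induction F as [|f F IH]; intro HF.
  - exists (fun _ => True). split; [apply open_full|]. split; [auto|]. intros f [].
  - destruct IH as [U [HU [Ux HUF]]]; [intros f' Hf'; apply HF; now right|].
    destruct (Hhaus x0 (act f x0)) as [A [B [HA [HB [Ax [Bfx Hdis]]]]]].
    { intro E. apply (HF f (or_introl eq_refl)). auto. }
    exists (fun y => U y /\ (A y /\ B (act f y))). split.
    { apply open_inter; [|apply open_inter]; auto. now apply act_cont. }
    split; [auto|].
    intros f' [<-|Hin] y [Uy [Ay By]] [Ufy [Afy Bffy]].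
    + apply (Hdis (act f y)); auto.
    + exact (HUF f' Hin y Uy Ufy).
Qed.

(** An open set meeting [L_N] contains both fixed points of some hyperbolic
    element of [N]: take a hyperbolic [h] in [N] with omega(h) in [U], push
    both of its fixed points into [U] by [h^n u] for a suitable [u], and
    conjugate [h] by this element. *)
Lemma hyperbolic_in_open (N : G -> Prop) (U : X -> Prop) w :
  normal_subgroup N -> is_open T U -> U w -> limit_set T act N w ->
  exists k, N k /\ exists a' w',
    hyperbolic_pts T (act k) (act (ginv k)) a' w' /\ U a' /\ U w'.
Proof.
  intros HN HU Uw [h [Nh [a Hp]]].
  destruct (exists_moving_element a w) as [t [Ht1 Ht2]].
  assert (Hua : act (ginv t) a <> a).
  { intro E. apply Ht1. rewrite <- E at 1. apply act_inv_r. }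
  assert (Huw : act (ginv t) w <> a).
  { intro E. apply Ht2. rewrite <- E. apply act_inv_r. }
  destruct (hyperbolic_attracts X T Hhaus _ _ _ _ Hp _ U Hua HU Uw) as [n1 Hn1].
  destruct (hyperbolic_attracts X T Hhaus _ _ _ _ Hp _ U Huw HU Uw) as [n2 Hn2].
  set (c := gmul (gpow h (max n1 n2)) (ginv t)).
  exists (gmul (gmul c h) (ginv c)). split.
  { destruct HN as [_ [_ [_ HNconj]]]. now apply HNconj. }
  exists (act c a), (act c w). split; [now apply hyperbolic_conj|].
  unfold c. rewrite !act_mul, !act_gpow.
  split; [apply Hn1|apply Hn2]; lia.
Qed.

Lemma ping_pong_translates k (U : X -> Prop) x0 m :
  0 < m -> (forall n, m <= n -> forall x, ~ U x -> U (act (gpow k n) x)) ->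
  forall i j d d', i < j -> ~ U (act d x0) -> ~ U (act d' x0) ->
    gmul (gpow k (i * m)) d <> gmul (gpow k (j * m)) d'.
Proof.
  intros Hm Hpow i j d d' Hij Hd Hd' E.
  assert (Ex0 := f_equal (fun g => act g x0) E). simpl in Ex0.
  rewrite !act_mul, !act_gpow in Ex0.
  replace (j * m) with (i * m + (j - i) * m) in Ex0 by nia.
  rewrite Nat.iter_add in Ex0.
  apply (iter_injective _ (act_inj k)) in Ex0.
  apply Hd. rewrite Ex0, <- act_gpow. apply Hpow; [nia|exact Hd'].
Qed.

Hypothesis Hsf : strongly_faithful_on act L_Gamma.

(** (iii) A normal subgroup containing a hyperbolic element is a Powers
    group.  [C] consists of the elements sending [x0] into [U] and [D] of
    the others; [F] moves [C] off itself, and a power of a hyperbolic [k]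
    in [N] with both fixed points in [U] separates the translates of [D]. *)
Lemma normal_subgroup_powers (N : G -> Prop) :
  normal_subgroup N -> (exists g, N g /\ hyp_elt T act g) -> powers N.
Proof.
  intros HN HNh. split.
  { destruct HNh as [g [Ng Hg]]. exists g. split; [exact Ng|].
    now apply hyperbolic_nontrivial. }
  intros F nk HF _.
  destruct (Hsf F) as [x0 [Lx0 Hx0]]; [intro Hin; now apply (HF gone Hin)|].
  destruct (ping_pong_neighbourhood F x0 Hx0) as [U [HU [Ux0 HUF]]].
  assert (Hx0N : closure T (limit_set T act N) x0).
  { apply (closure_limit_set_normal N HN HNh). now apply subset_closure. }
  destruct (Hx0N U HU Ux0) as [w [Uw Lw]].
  destruct (hyperbolic_in_open N U w HN HU Uw Lw) as [k [Nk [a' [w' [Hp [Ua' Uw']]]]]].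
  destruct (hyperbolic_absorbs X T _ _ _ _ Hp U HU Ua' Uw') as [m [Hm Hpow]].
  exists (fun y => N y /\ U (act y x0)), (fun y => N y /\ ~ U (act y x0)),
    (fun i => gpow k (i * m)).
  split; [|split; [|split; [|split]]].
  - intro y. split; [|intros [[]|[]]; auto].
    intro Ny. destruct (classic (U (act y x0))); auto.
  - intros y [[_ H] [_ H']]. auto.
  - intros i _. now apply normal_gpow.
  - intros f Hf c [_ Uc] [_ Ufc]. rewrite act_mul in Ufc. exact (HUF f Hf _ Uc Ufc).
  - intros i j _ _ Hij d d' [_ Hd] [_ Hd'].
    assert (Hkpow : forall n, m <= n -> forall x, ~ U x -> U (act (gpow k n) x)).
    { intros n Hn x Hx. rewrite act_gpow. now apply Hpow. }
    destruct (Nat.lt_gt_cases i j) as [[Hlt|Hgt] _]; [exact Hij| |].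
    + exact (ping_pong_translates k U x0 m Hm Hkpow i j d d' Hlt Hd Hd').
    + intro E. exact (ping_pong_translates k U x0 m Hm Hkpow j i d' d Hgt Hd' Hd (eq_sym E)).
Qed.

End Action.

Theorem proposition7p1 (G : group) (X : Type) (T : topology X) (act : G -> X -> X) :
  hausdorff T ->
  action_by_homeos T act ->
  strongly_hyperbolic T act ->
  strongly_faithful_on act (limit_set T act (fun _ => True)) ->
  (* (i) *)
  (forall S : X -> Prop,
     is_closed T S -> (exists x, S x) -> (forall g x, S x -> S (act g x)) ->
     forall x, closure T (limit_set T act (fun _ => True)) x -> S x) /\
  (* (ii) and (iii) *)
  (forall N : G -> Prop,
     normal_subgroup N -> (exists g, N g /\ hyp_elt T act g) ->
     (forall x, closure T (limit_set T act N) x <->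
                closure T (limit_set T act (fun _ => True)) x) /\
     powers N).
Proof.
  intros Hhaus Hact Hsh Hsf. split.
  - exact (closed_invariant_contains_limit_set G X T act Hhaus Hact Hsh).
  - intros N HN HNh. split.
    + exact (closure_limit_set_normal G X T act Hhaus Hact Hsh N HN HNh).
    + exact (normal_subgroup_powers G X T act Hhaus Hact Hsh Hsf N HN HNh).
Qed.
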